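(* Let $G_p$ be the graph defined in the context. Then $\alpha(G_p)<\alpha_q(G_p)$. (More precisely, $\alpha(G_p)\le 5$ while $\alpha_q(G_p)\ge 6$.)
   Context: All graphs are finite and simple. $\alpha(X)$ denotes the (classical) independence number of $X$. For a finite simple graph $X$ and positive integers $s,d$, a quantum $s$-coclique matrix (in dimension $d$) is a $|V(X)|\times s$ array $P=(P_{vi})_{v\in V(X),\, i\in[s]}$ of orthogonal projections $P_{vi}\in\mathbb{C}^{d\times d}$ such that (a) $\sum_{v\in V(X)}P_{vi}=I_d$ for every $i\in[s]$; (b) $P_{vi}P_{uj}=0$ for all $i\neq j$ in $[s]$ and all adjacent vertices $u\sim v$; (c) $P_{vi}P_{vj}=0$ for all $v\in V(X)$ and all $i\neq j$ in $[s]$. The quantum independence number $\alpha_q(X)$ is the largest $s$ such that a quantum $s$-coclique matrix for $X$ exists for some $d\ge 1$. $G_p$ is the orthogonality graph of the following 24 vectors in $\mathbb{R}^4$ (vertices are the vectors; two are adjacent iff their standard inner product is $0$): $(1,0,0,0),(0,1,0,0),(0,0,1,0),(0,0,0,1)$; $(0,1,1,0),(1,0,0,-1),(1,0,0,1),(0,1,-1,0)$; $(1,1,1,1),(1,-1,1,-1),(1,-1,-1,1),(1,1,-1,-1)$; $(1,-1,0,0),(1,1,0,0),(0,0,1,1),(0,0,1,-1)$; $(-1,1,1,1),(1,1,1,-1),(1,-1,1,1),(1,1,-1,1)$; $(1,0,1,0),(0,1,0,1),(1,0,-1,0),(0,1,0,-1)$. *)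

From HB Require Import structures.
From mathcomp Require Import all_boot all_order all_algebra.
From mathcomp Require Import Rstruct complex.
Unset Printing Implicit Defensive.
Import Order.TTheory GRing.Theory Num.Theory.

Local Open Scope ring_scope.

Definition C : numClosedFieldType := (Rdefinitions.R)[i]%C.

(* A finite simple graph is given by a vertex finType V and an adjacency
   relation e (assumed symmetric and irreflexive where needed). *)

Definition independent (V : finType) (e : rel V) (S : {set V}) : bool :=
  [forall u in S, forall v in S, ~~ e u v].

Definition alpha (V : finType) (e : rel V) : nat :=
  \max_(S : {set V} | independent V e S) #|S|.

Definition is_projection (d : nat) (A : 'M[C]_d) : Prop :=
  A *m A = A /\ map_mx Num.conj A^T = A.

Definition quantum_coclique (V : finType) (e : rel V) (s d : nat)
    (P : V -> 'I_s -> 'M[C]_d) : Prop :=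
  [/\ (forall v i, is_projection d (P v i)),
      (forall i, \sum_(v : V) P v i = 1%:M),
      (forall (i j : 'I_s) (u v : V), i != j -> e u v -> P v i *m P u j = 0)
    & (forall (v : V) (i j : 'I_s), i != j -> P v i *m P v j = 0)].

Definition has_quantum_coclique (V : finType) (e : rel V) (s : nat) : Prop :=
  exists d : nat, (0 < d)%N /\ exists P : V -> 'I_s -> 'M[C]_d,
    quantum_coclique V e s d P.

(* "alpha X < alpha_q X", where alpha_q X is the largest s admitting a quantum
   s-coclique matrix: equivalently some s > alpha X admits one. *)
Definition alpha_lt_alpha_q (V : finType) (e : rel V) : Prop :=
  exists s : nat, (alpha V e < s)%N /\ has_quantum_coclique V e s.

Definition Gp_vecs : seq (int * int * int * int) :=
  [:: (1,0,0,0); (0,1,0,0); (0,0,1,0); (0,0,0,1);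
      (0,1,1,0); (1,0,0,-1); (1,0,0,1); (0,1,-1,0);
      (1,1,1,1); (1,-1,1,-1); (1,-1,-1,1); (1,1,-1,-1);
      (1,-1,0,0); (1,1,0,0); (0,0,1,1); (0,0,1,-1);
      (-1,1,1,1); (1,1,1,-1); (1,-1,1,1); (1,1,-1,1);
      (1,0,1,0); (0,1,0,1); (1,0,-1,0); (0,1,0,-1)]%Z.

Definition Gp_vec (v : 'I_24) : int * int * int * int :=
  nth (0, 0, 0, 0)%Z Gp_vecs v.

Definition dot4 (x y : int * int * int * int) : int :=
  let: (a1, a2, a3, a4) := x in let: (b1, b2, b3, b4) := y in
  a1 * b1 + a2 * b2 + a3 * b3 + a4 * b4.

Definition Gp : rel 'I_24 := fun u v => dot4 (Gp_vec u) (Gp_vec v) == 0.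
Arguments alpha {V} e.
Arguments alpha_lt_alpha_q {V} e.
Arguments has_quantum_coclique {V} e s.

(* The 24 vectors form six orthogonal bases of R^4 (four consecutive vectors
   each), so every basis is a clique of G_p.  An independent set meets each
   basis at most once, and a finite check shows that no choice of one vector
   per basis avoids all orthogonal pairs; hence alpha(G_p) <= 5.
   Quantumly, let P_{v,i} be the orthogonal projection onto v when v lies in
   the i-th basis and 0 otherwise: each basis resolves the identity, and the
   products across adjacent vertices vanish by orthogonality, giving a
   quantum 6-coclique matrix in dimension 4. *)

From mathcomp Require Import all_boot all_order all_algebra zify.
Import GRing.Theory Num.Theory.

Lemma independent_lt_clique_partition {V I : finType} {e : rel V}
    {block : V -> I} {S : {set V}} :
  (forall u v, u != v -> block u = block v -> e u v) ->
  (forall g : I -> V, (forall i, block (g i) = i) -> exists i j, e (g i) (g j)) ->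
  independent V e S -> #|S| < #|I|.
Proof.
move=> clique no_transversal /forallP indS.
have nadj u v : u \in S -> v \in S -> ~~ e u v.
  by move=> uS vS; move: (indS u) => /implyP/(_ uS)/forallP/(_ v)/implyP/(_ vS).
rewrite ltnNge; apply/negP => I_le_S.
have block_inj : {in S &, injective block}.
  move=> u v uS vS buv; apply/eqP; apply: contraNT (nadj u v uS vS) => uv.
  exact: clique.
have block_onto : block @: S = setT.
  by apply/eqP; rewrite eqEcard subsetT cardsT card_in_imset.
have /fin_all_exists [g gP] : forall i, exists v, v \in S /\ block v = i.
  move=> i; have : i \in block @: S by rewrite block_onto inE.
  by case/imsetP=> v vS ->; exists v.
have [i [j eij]] := no_transversal g (fun i => (gP i).2).
by move: (nadj _ _ (gP i).1 (gP j).1); rewrite eij.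
Qed.

Local Open Scope ring_scope.

Section RankOneProjection.

Context {F : fieldType} {n : nat}.
Implicit Types x y : 'cV[F]_n.

Definition cvdot x y : F := (x^T *m y) 0 0.

Definition proj_line x : 'M[F]_n := (cvdot x x)^-1 *: (x *m x^T).

Lemma cvdotC x y : cvdot x y = cvdot y x.
Proof. by rewrite /cvdot -[y^T *m x]trmxK trmx_mul trmxK [in RHS]mxE. Qed.

Lemma proj_lineM x y :
  proj_line x *m proj_line y =
  ((cvdot x x)^-1 * cvdot x y * (cvdot y y)^-1) *: (x *m y^T).
Proof.
rewrite /proj_line -scalemxAl -scalemxAr scalerA mulmxA -(mulmxA x).
by rewrite [x^T *m y]mx11_scalar mul_mx_scalar -scalemxAl scalerA mulrAC.
Qed.

Lemma proj_line_idem x : cvdot x x != 0 -> proj_line x *m proj_line x = proj_line x.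
Proof. by move=> nz; rewrite proj_lineM mulVf // mul1r. Qed.

Lemma proj_line_orth x y : cvdot x y = 0 -> proj_line x *m proj_line y = 0.
Proof. by move=> xy; rewrite proj_lineM xy mulr0 mul0r scale0r. Qed.

Lemma trmx_proj_line x : (proj_line x)^T = proj_line x.
Proof. by rewrite linearZ /= trmx_mul trmxK. Qed.

Lemma sum_proj_line_orthogonal_basis (y : 'I_n -> 'cV[F]_n) :
  (forall k, cvdot (y k) (y k) != 0) ->
  (forall k l, k != l -> cvdot (y k) (y l) = 0) ->
  \sum_k proj_line (y k) = 1%:M.
Proof.
move=> nondeg orth.
(* With B the matrix of rows y k and E the inverse of the (diagonal) Gram
   matrix B B^T, B^T E is a right inverse of B, hence also a left one. *)
pose B : 'M[F]_n := \matrix_(k, a) y k a 0.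
pose E : 'M[F]_n := diag_mx (\row_k (cvdot (y k) (y k))^-1).
have BBt : B *m B^T = \matrix_(k, l) cvdot (y k) (y l).
  by apply/matrixP=> k l; rewrite !mxE /cvdot mxE; apply: eq_bigr => a _; rewrite !mxE.
have inv_BtE : B *m (B^T *m E) = 1%:M.
  apply/matrixP=> k l; rewrite mulmxA BBt mul_mx_diag !mxE.
  have [<-|kl] := eqVneq k l; first by rewrite mulfV.
  by rewrite orth // mul0r.
rewrite -(mulmx1C inv_BtE); apply/matrixP=> a b.
rewrite summxE mul_mx_diag !mxE; apply: eq_bigr => k _.
by rewrite !mxE big_ord1 !mxE mulrCA mulrA.
Qed.

End RankOneProjection.

Lemma map_proj_line (F K : fieldType) (n : nat) (f : {rmorphism F -> K})
    (x : 'cV[F]_n) :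
  map_mx f (proj_line x) = proj_line (map_mx f x).
Proof.
by rewrite map_mxZ fmorphV /proj_line /cvdot !map_trmx -!map_mxM [in RHS]mxE.
Qed.

Section OrthogonalBasesCoclique.

Context {V : finType} (e : rel V) {s d : nat}.
Variables (x : V -> 'cV[C]_d) (block : V -> 'I_s).
Hypothesis x_real : forall v, map_mx Num.conj (x v) = x v.
Hypothesis x_nondeg : forall v, cvdot (x v) (x v) != 0.
Hypothesis adj_orth : forall u v, e u v -> cvdot (x u) (x v) = 0.
Hypothesis block_sum : forall i, \sum_(v | block v == i) proj_line (x v) = 1%:M.

Definition block_projection (v : V) (i : 'I_s) : 'M[C]_d :=
  if block v == i then proj_line (x v) else 0.

Lemma block_projection_coclique : quantum_coclique V e s d block_projection.
Proof.
rewrite /block_projection; split.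
- move=> v i; case: ifP => _; last by split; rewrite ?mul0mx // trmx0 map_mx0.
  by split; [apply: proj_line_idem | rewrite trmx_proj_line map_proj_line x_real].
- by move=> i; rewrite -big_mkcond.
- move=> i j u v _ uv; case: ifP => _; last by rewrite mul0mx.
  case: ifP => _; last by rewrite mulmx0.
  by apply: proj_line_orth; rewrite cvdotC adj_orth.
- move=> v i j ij; case: ifP => [/eqP ->|_]; last by rewrite mul0mx.
  by rewrite ifN ?mulmx0.
Qed.

End OrthogonalBasesCoclique.

Local Close Scope ring_scope.

Lemma all_iota_ord {n} {P : pred nat} : all P (iota 0 n) -> forall i : 'I_n, P i.
Proof. by move=> /allP Pn i; apply: Pn; rewrite mem_iota ltn_ord. Qed.

Fixpoint all_choices (n m : nat) (P : seq nat -> bool) : bool :=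
  if n is n'.+1 then all (fun k => all_choices n' m (fun s => P (k :: s))) (iota 0 m)
  else P [::].

Lemma all_choicesP {n m : nat} {P : seq nat -> bool} {s : seq nat} :
  all_choices n m P -> size s = n -> all (fun k => k < m) s -> P s.
Proof.
elim: n P s => [|n IHn] P [|k s] //= /allP choices [size_s] /andP [km sm].
by apply: (IHn (fun s => P (k :: s))) => //; apply: choices; rewrite mem_iota.
Qed.

(* Enumerations of finTypes do not reduce under vm_compute, so the finite
   checks below run over [iota] with this nat-indexed copy of [Gp]. *)
Definition Gp_adjn (u v : nat) : bool :=
  (dot4 (nth (0, 0, 0, 0) Gp_vecs u) (nth (0, 0, 0, 0) Gp_vecs v) == 0)%R.

(* Vertex [4 * i + k] is the [k]-th vector of the [i]-th orthogonal basis. *)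
Definition Gp_block (v : 'I_24) : 'I_6 := inord (v %/ 4).
Definition Gp_slot (v : 'I_24) : 'I_4 := inord (v %% 4).
Definition Gp_vertex (i : 'I_6) (k : 'I_4) : 'I_24 := inord (4 * i + k).

Lemma Gp_blockE (v : 'I_24) : v = 4 * Gp_block v + Gp_slot v :> nat.
Proof. by have v24 := ltn_ord v; rewrite !inordK; lia. Qed.

Lemma Gp_vertexK v : Gp_vertex (Gp_block v) (Gp_slot v) = v.
Proof. by rewrite /Gp_vertex -Gp_blockE inord_val. Qed.

Lemma Gp_block_vertex i k : Gp_block (Gp_vertex i k) = i.
Proof.
have i6 := ltn_ord i; have k4 := ltn_ord k.
by apply: val_inj; rewrite /= !inordK; lia.
Qed.

Lemma Gp_slot_vertex i k : Gp_slot (Gp_vertex i k) = k.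
Proof.
have i6 := ltn_ord i; have k4 := ltn_ord k.
by apply: val_inj; rewrite /= !inordK; lia.
Qed.

Lemma Gp_block_clique u v : u != v -> Gp_block u = Gp_block v -> Gp u v.
Proof.
have check : all (fun u => all (fun v =>
    (u != v) ==> (u %/ 4 == v %/ 4) ==> Gp_adjn u v) (iota 0 24)) (iota 0 24).
  by vm_compute.
move=> uv /(congr1 val); rewrite /= !inordK ?ltn_divLR // => /eqP uv_block.
by move: (all_iota_ord check u) => /all_iota_ord/(_ v); rewrite uv uv_block.
Qed.

Lemma Gp_transversal_adj (g : 'I_6 -> 'I_24) :
  (forall i, Gp_block (g i) = i) -> exists i j, Gp (g i) (g j).
Proof.
have check : all_choices 6 4 (fun s => has (fun i => has (fun j =>
    Gp_adjn (4 * i + nth 0 s i) (4 * j + nth 0 s j)) (iota 0 6)) (iota 0 6)).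
  by vm_compute.
move=> g_block; pose s := mkseq (fun i => nat_of_ord (Gp_slot (g (inord i)))) 6.
have sP (i : 'I_6) : 4 * i + nth 0 s i = g i.
  by rewrite nth_mkseq // inord_val Gp_blockE g_block.
have s_lt4 : all (fun k => k < 4) s by apply/allP=> _ /mapP [i _ ->].
case/hasP: (all_choicesP check (size_mkseq _ _) s_lt4) => i.
rewrite mem_iota => /andP [_ i6] /hasP [j]; rewrite mem_iota => /andP [_ j6].
move: (sP (Ordinal i6)) (sP (Ordinal j6)) => /= -> ->.
by exists (Ordinal i6), (Ordinal j6).
Qed.

Lemma alpha_Gp_le5 : alpha Gp <= 5.
Proof.
apply/bigmax_leqP=> S indS.
have := independent_lt_clique_partition Gp_block_clique Gp_transversal_adj indS.
by rewrite card_ord.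
Qed.

Local Open Scope ring_scope.

Definition int4_col (w : int * int * int * int) : 'cV[C]_4 :=
  let: (a, b, c, d) := w in \col_k ([:: a; b; c; d]`_k)%:~R.

Lemma cvdot_int4_col w w' : cvdot (int4_col w) (int4_col w') = (dot4 w w')%:~R.
Proof.
case: w => [[[a b] c] d]; case: w' => [[[a' b'] c'] d'].
by rewrite /cvdot mxE !big_ord_recr big_ord0 /= !mxE /= !rmorphD !rmorphM /= add0r.
Qed.

Lemma int4_col_real w : map_mx Num.conj (int4_col w) = int4_col w.
Proof.
by case: w => [[[a b] c] d]; apply/matrixP=> k l; rewrite !mxE conj_Creal ?realz.
Qed.

Definition Gp_col (v : 'I_24) : 'cV[C]_4 := int4_col (Gp_vec v).

Lemma Gp_col_nondeg v : cvdot (Gp_col v) (Gp_col v) != 0.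
Proof.
have check : all (fun v => dot4 (nth (0, 0, 0, 0) Gp_vecs v)
                                 (nth (0, 0, 0, 0) Gp_vecs v) != 0) (iota 0 24).
  by vm_compute.
by rewrite cvdot_int4_col intr_eq0; apply: (all_iota_ord check).
Qed.

Lemma Gp_adj_orth u v : Gp u v -> cvdot (Gp_col u) (Gp_col v) = 0.
Proof. by move/eqP; rewrite cvdot_int4_col => ->. Qed.

Lemma Gp_block_sum i : \sum_(v | Gp_block v == i) proj_line (Gp_col v) = 1%:M.
Proof.
rewrite (reindex_onto (Gp_vertex i) Gp_slot) => [|v /eqP <-]; last exact: Gp_vertexK.
rewrite (eq_bigl xpredT) => [|k]; last by rewrite Gp_block_vertex Gp_slot_vertex !eqxx.
apply: sum_proj_line_orthogonal_basis => [k|k l kl]; first exact: Gp_col_nondeg.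
apply/Gp_adj_orth/Gp_block_clique; last by rewrite !Gp_block_vertex.
by apply: contra kl => /eqP/(congr1 Gp_slot); rewrite !Gp_slot_vertex => ->.
Qed.

Lemma Gp_quantum_coclique6 : has_quantum_coclique Gp 6.
Proof.
exists 4%N; split => //; exists (block_projection Gp_col Gp_block).
apply: block_projection_coclique => [v|||]; first exact: int4_col_real.
- exact: Gp_col_nondeg.
- exact: Gp_adj_orth.
- exact: Gp_block_sum.
Qed.

Theorem mainTheorem1 :
  [/\ alpha_lt_alpha_q Gp, (alpha Gp <= 5)%N & has_quantum_coclique Gp 6].
Proof.
split; [exists 6%N; split | exact: alpha_Gp_le5 | exact: Gp_quantum_coclique6].
- by rewrite ltnS alpha_Gp_le5.
- exact: Gp_quantum_coclique6.
Qed.
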